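(* Let $E$ be an IL FS encoder with $s$ states whose Kraft matrix $K$ is irreducible, and let $L_{\max}=\max_{z\in\mathcal{Z},x\in\mathcal{X}}L[f(z,x)]$. Then for all $z,z'\in\mathcal{Z}$ and every positive integer $n$, $$(K^n)_{zz'}=\sum_{\{x^n\in\mathcal{X}^n:\ g(z,x^n)=z'\}}2^{-L[f(z,x^n)]}\le 2^{(s-1)L_{\max}}.$$ Consequently, for every $z\in\mathcal{Z}$ and every $n$, $$\sum_{x^n\in\mathcal{X}^n}2^{-L[f(z,x^n)]}\le s\cdot 2^{(s-1)L_{\max}},\qquad \sum_{z\in\mathcal{Z}}\sum_{x^n\in\mathcal{X}^n}2^{-L[f(z,x^n)]}\le s^2\cdot 2^{(s-1)L_{\max}}.$$
   Context: A finite-state (FS) encoder is a quintuple $E=(\mathcal{X},\mathcal{Y},\mathcal{Z},f,g)$, where $\mathcal{X}$ is a finite source alphabet of size $\alpha$, $\mathcal{Y}$ is a finite set of binary strings (possibly containing the empty string, of length $0$), $\mathcal{Z}$ is a finite set of $s$ states, $f:\mathcal{Z}\times\mathcal{X}\to\mathcal{Y}$ is the output function and $g:\mathcal{Z}\times\mathcal{X}\to\mathcal{Z}$ is the next-state function. For $z\in\mathcal{Z}$ and $x^n=(x_1,\dots,x_n)\in\mathcal{X}^n$, set $z_1=z$, $z_{i+1}=g(z_i,x_i)$; write $g(z,x^n)=z_{n+1}$ and let $f(z,x^n)$ denote the binary string obtained by concatenating $f(z_1,x_1),\dots,f(z_n,x_n)$; its length is $L[f(z,x^n)]=\sum_{i=1}^n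 L[f(z_i,x_i)]$, where $L(\cdot)$ denotes the length of a binary string. The encoder is information lossless (IL) if for every $z\in\mathcal{Z}$ and every $n\ge1$, the map $x^n\mapsto (f(z,x^n),g(z,x^n))$ is injective on $\mathcal{X}^n$. The Kraft matrix of $E$ is the $s\times s$ nonnegative matrix $K$ with entries $K_{zz'}=\sum_{\{x\in\mathcal{X}:\ g(z,x)=z'\}}2^{-L[f(z,x)]}$ (an empty sum is $0$). *)

From HB Require Import structures.
From mathcomp Require Import all_boot all_order all_algebra.
Set Implicit Arguments. Unset Strict Implicit. Unset Printing Implicit Defensive.
Import Order.TTheory GRing.Theory Num.Theory.
Local Open Scope ring_scope.

Section FSEncoder.
Variables (X Z : finType) (f : Z -> X -> seq bool) (g : Z -> X -> Z).

Fixpoint fs_next (z : Z) (xs : seq X) : Z :=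
  if xs is x :: xs' then fs_next (g z x) xs' else z.

Fixpoint fs_out (z : Z) (xs : seq X) : seq bool :=
  if xs is x :: xs' then f z x ++ fs_out (g z x) xs' else [::].

Definition info_lossless : Prop :=
  forall (z : Z) (n : nat), (0 < n)%N ->
    injective (fun t : n.-tuple X => (fs_out z t, fs_next z t)).

Definition Lmax : nat := \max_(z : Z) \max_(x : X) size (f z x).

Variable R : realFieldType.

Definition kraft_matrix : 'M[R]_#|Z| :=
  \matrix_(i, j) \sum_(x : X | g (enum_val i) x == enum_val j)
                    (2%:R : R) ^- size (f (enum_val i) x).

End FSEncoder.

(* matrix power, valid for any square size *)
Definition mxpow (R : pzRingType) (m : nat) (A : 'M[R]_m) (k : nat) : 'M[R]_m :=
  iter k (fun B => A *m B) 1%:M.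

Definition irreducible_mx (R : numDomainType) (m : nat) (A : 'M[R]_m) : Prop :=
  (forall i j, 0 <= A i j) /\ forall i j, exists k : nat, 0 < mxpow A k i j.

From HB Require Import structures.
From mathcomp Require Import all_boot all_order all_algebra.
From mathcomp Require Import lra zify.
Set Implicit Arguments. Unset Strict Implicit. Unset Printing Implicit Defensive.
Import Order.TTheory GRing.Theory Num.Theory.
Local Open Scope ring_scope.

(* Information losslessness makes the outputs of the words from z
   back to z pairwise distinct, so grouping them by output length gives
   (K^n)_{zz} <= n Lmax + 1.  The diagonal entries are supermultiplicative,
   ((K^n)_{zz})^k <= (K^{kn})_{zz}, and their denominators divide 2^{n Lmax};
   linear growth of the powers then forces (K^n)_{zz} <= 1.  Finally,
   irreducibility gives a word from z' back to z of length m <= s - 1, whose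
   weight is at least 2^{-m Lmax}, and (K^n)_{zz'} 2^{-m Lmax} <= (K^{n+m})_{zz}
   <= 1. *)

Lemma card_inj_bits_eq (T : finType) (A : {pred T}) (h : T -> seq bool) l :
  {in A &, injective h} -> {in A, forall t, size (h t) = l} -> (#|A| <= 2 ^ l)%N.
Proof.
move=> h_inj h_size.
pose ht t : l.-tuple bool := insubd (nseq_tuple l false) (h t).
have ht_inj : {in A &, injective ht}.
  by move=> a b Aa Ab /(congr1 val); rewrite !val_insubd !h_size ?eqxx // => /h_inj; apply.
rewrite -(card_in_imset ht_inj); apply: leq_trans (max_card _) _.
by rewrite card_tuple card_bool.
Qed.

Lemma sum_inj_bits_le (R : numFieldType) (T : finType) (A : {pred T})
    (h : T -> seq bool) D :
  {in A &, injective h} -> {in A, forall t, size (h t) <= D}%N ->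
  \sum_(t in A) (2%:R : R) ^- size (h t) <= D.+1%:R.
Proof.
move=> h_inj h_size.
have ordK t : t \in A -> (inord (size (h t)) : 'I_D.+1) = size (h t) :> nat.
  by move=> At; rewrite inordK // ltnS h_size.
rewrite (partition_big (fun t => inord (size (h t)) : 'I_D.+1) predT) //=.
rewrite -[X in _ <= X]mulr1 -[in X in _ <= X](card_ord D.+1) mulr_natl -sumr_const.
apply: ler_sum => l _.
set B := [pred t | (t \in A) && (inord (size (h t)) == l)].
have -> : \sum_(t | (t \in A) && (inord (size (h t)) == l)) (2%:R : R) ^- size (h t)
          = (2%:R : R) ^- l *+ #|B|.
  rewrite -sumr_const; apply: eq_bigr => t /andP[At /eqP <-].
  by rewrite ordK.
have card_B : (#|B| <= 2 ^ l)%N.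
  apply: (card_inj_bits_eq (h := h)) => [a b /andP[Aa _] /andP[Ab _]|t /andP[At /eqP <-]].
    exact: h_inj.
  by rewrite ordK.
rewrite -[_ *+ #|B|]mulr_natr; apply: (@le_trans _ _ ((2%:R : R) ^- l * (2 ^ l)%:R)).
  by apply: ler_wpM2l; rewrite ?invr_ge0 ?exprn_ge0 ?ler0n ?ler_nat.
by rewrite natrX mulVf // expf_neq0 // pnatr_eq0.
Qed.

Lemma Bernoulli_ineq (R : realDomainType) (e : R) n :
  0 <= e -> 1 + e *+ n <= (1 + e) ^+ n.
Proof.
move=> e_ge0; elim: n => [|n IHn]; first by rewrite expr0 mulr0n addr0.
have pow_ge1 : 1 <= (1 + e) ^+ n by rewrite exprn_ege1 // lerDl.
rewrite exprS mulrS; set p := (1 + e) ^+ n in IHn pow_ge1 *.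
have : e <= e * p by rewrite ler_peMr.
lra.
Qed.

Lemma exists_lt_exp2 C : exists m, ((C * m).+1 < 2 ^ m)%N.
Proof.
exists (2 * (2 * C.+1))%N.
have := ltn_expl (2 * C.+1) (isT : (1 < 2)%N).
have -> : (2 ^ (2 * (2 * C.+1)) = (2 ^ (2 * C.+1)) ^ 2)%N by rewrite -expnM mulnC.
nia.
Qed.

(* The bounded denominator is what makes this true in a non-archimedean field. *)
Lemma le1_of_linear_powers (R : realFieldType) (a : R) (E D c : nat) :
  (0 < E)%N -> a * E%:R = c%:R -> (forall k, a ^+ k <= (k * D).+1%:R) -> a <= 1.
Proof.
move=> E_gt0 a_denom a_pow; rewrite leNgt; apply/negP => a_gt1.
have E_pos : 0 < E%:R :> R by rewrite ltr0n.
have a_ge : 1 + E%:R^-1 <= a.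
  have lt_Ec : (E < c)%N by rewrite -(ltr_nat R) -a_denom ltr_pMl.
  by rewrite -(ler_pM2r E_pos) mulrDl mul1r mulVf ?gt_eqF // a_denom natr1 ler_nat.
have aE_ge2 : 2 <= a ^+ E.
  have e_ge0 : 0 <= E%:R^-1 :> R by rewrite invr_ge0 ler0n.
  have -> : 2 = 1 + E%:R^-1 *+ E :> R by rewrite -[E%:R^-1 *+ E]mulr_natr mulVf ?gt_eqF.
  apply: le_trans (Bernoulli_ineq E e_ge0) _.
  by rewrite lerXn2r // nnegrE ?addr_ge0 // (le_trans _ a_ge) // addr_ge0.
have [m lt_exp2] := exists_lt_exp2 (E * D).
have := a_pow (E * m)%N; rewrite leNgt => /negP; apply.
apply: lt_le_trans (_ : (2 ^ m)%:R <= a ^+ (E * m)).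
  by rewrite ltr_nat mulnAC.
rewrite natrX exprM; apply: lerXn2r; rewrite ?nnegrE //.
by rewrite exprn_ge0 // ltW // (lt_trans ltr01).
Qed.

Lemma big_tuple0 (V : nmodType) (T : finType) (F : 0.-tuple T -> V) :
  \sum_(t : 0.-tuple T) F t = F [tuple].
Proof. by rewrite (big_pred1 [tuple]) // => t; apply/esym/eqP; apply: tuple0. Qed.

Lemma big_tupleS (V : nmodType) (T : finType) n (F : n.+1.-tuple T -> V) :
  \sum_(t : n.+1.-tuple T) F t = \sum_(x : T) \sum_(t : n.-tuple T) F [tuple of x :: t].
Proof.
rewrite pair_big (reindex (fun p : T * n.-tuple T => [tuple of p.1 :: p.2])) //=.
exists (fun t : n.+1.-tuple T => (thead t, behead_tuple t)).
  by move=> [x t] _; congr pair; apply: val_inj.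
by move=> t _; rewrite [in RHS](tuple_eta t); apply: val_inj.
Qed.

Lemma mxpowD (R : pzRingType) m (A : 'M[R]_m) a b :
  mxpow A (a + b) = mxpow A a *m mxpow A b.
Proof.
elim: a => [|a IHa]; first by rewrite mul1mx.
by rewrite addSn /mxpow /= -/(mxpow A (a + b)) IHa mulmxA.
Qed.

Section FSPaths.
Variables (X Z : finType) (g : Z -> X -> Z).

Definition fs_step : rel Z := fun u v => [exists x, g u x == v].

Fixpoint fs_trajectory (u : Z) (xs : seq X) : seq Z :=
  if xs is x :: xs' then g u x :: fs_trajectory (g u x) xs' else [::].

Lemma path_fs_trajectory u xs : path fs_step u (fs_trajectory u xs).
Proof.
elim: xs u => [|x xs IHxs] u //=.
by rewrite IHxs andbT; apply/existsP; exists x.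
Qed.

Lemma last_fs_trajectory u xs : last u (fs_trajectory u xs) = fs_next g u xs.
Proof. by elim: xs u => [|x xs IHxs] u //=. Qed.

Lemma fs_step_path_word u p : path fs_step u p ->
  exists2 xs : seq X, size xs = size p & fs_next g u xs = last u p.
Proof.
elim: p u => [|v p IHp] u /=; first by exists [::].
case/andP=> /existsP[x /eqP gux] /IHp[xs size_xs next_xs].
by exists (x :: xs); rewrite /= ?size_xs ?gux.
Qed.

Lemma fs_next_short_word u xs :
  exists2 ys : seq X, (size ys <= #|Z| - 1)%N & fs_next g u ys = fs_next g u xs.
Proof.
have := path_fs_trajectory u xs; rewrite -last_fs_trajectory.
case/shortenP=> p path_p uniq_p _.
have [ys size_ys next_ys] := fs_step_path_word path_p.
exists ys; rewrite // size_ys.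
have := max_card (mem (u :: p)); rewrite (card_uniqP uniq_p) /=; lia.
Qed.

End FSPaths.

Section KraftSums.
Variables (R : realFieldType) (X Z : finType).
Variables (f : Z -> X -> seq bool) (g : Z -> X -> Z).

Definition word_weight z (t : seq X) : R := (2%:R : R) ^- size (fs_out f g z t).

Definition kraft_sum n z z' : R :=
  \sum_(t : n.-tuple X | fs_next g z t == z') word_weight z t.

Lemma word_weight_ge0 z t : 0 <= word_weight z t.
Proof. by rewrite invr_ge0 exprn_ge0 ?ler0n. Qed.

Lemma word_weight_cons z x t :
  word_weight z (x :: t) = (2%:R : R) ^- size (f z x) * word_weight (g z x) t.
Proof. by rewrite /word_weight /= size_cat exprD invfM. Qed.

Lemma kraft_sum0 z z' : kraft_sum 0 z z' = (z == z')%:R.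
Proof.
by rewrite /kraft_sum big_mkcond big_tuple0 /= /word_weight expr0 invr1; case: eqP.
Qed.

Lemma kraft_sumS n z z' :
  kraft_sum n.+1 z z' = \sum_x (2%:R : R) ^- size (f z x) * kraft_sum n (g z x) z'.
Proof.
rewrite /kraft_sum big_mkcond big_tupleS; apply: eq_bigr => x _.
rewrite [in RHS]big_mkcond mulr_sumr; apply: eq_bigr => t _ /=.
by rewrite word_weight_cons; case: ifP; rewrite ?mulr0.
Qed.

Lemma mxpow_kraft_matrix n z z' :
  mxpow (kraft_matrix f g R) n (enum_rank z) (enum_rank z') = kraft_sum n z z'.
Proof.
elim: n z => [|n IHn] z; first by rewrite mxE kraft_sum0 (inj_eq enum_rank_inj).
rewrite /mxpow /= -/(mxpow _ n) mxE kraft_sumS.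
rewrite (reindex (@enum_rank Z)) /=; last exact: onW_bij (enum_rank_bij Z).
rewrite (partition_big (g z) predT) //=; apply: eq_bigr => w _.
rewrite mxE !enum_rankK IHn mulr_suml.
by apply: eq_bigr => x /eqP ->.
Qed.

Lemma kraft_sum_ge0 n z z' : 0 <= kraft_sum n z z'.
Proof. by apply: sumr_ge0 => t _; apply: word_weight_ge0. Qed.

Lemma kraft_sum_mul_le n m u v w :
  kraft_sum n u v * kraft_sum m v w <= kraft_sum (n + m) u w.
Proof.
rewrite -!mxpow_kraft_matrix mxpowD mxE.
rewrite (reindex (@enum_rank Z)) /=; last exact: onW_bij (enum_rank_bij Z).
rewrite (bigD1 v) //= lerDl; apply: sumr_ge0 => y _.
by rewrite !mxpow_kraft_matrix mulr_ge0 ?kraft_sum_ge0.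
Qed.

Lemma kraft_sum_expn_le n z k : kraft_sum n z z ^+ k <= kraft_sum (k * n) z z.
Proof.
elim: k => [|k IHk]; first by rewrite expr0 kraft_sum0 eqxx.
rewrite exprS mulSn; apply: le_trans (kraft_sum_mul_le _ _ _ _ _).
by apply: ler_wpM2l; first exact: kraft_sum_ge0.
Qed.

Lemma size_fs_out_le z (t : seq X) : (size (fs_out f g z t) <= size t * Lmax f)%N.
Proof.
elim: t z => [|x t IHt] z //=.
rewrite size_cat mulSn leq_add // /Lmax.
exact: leq_trans (leq_bigmax x) (leq_bigmax (F := fun z => \max_x size (f z x)) z).
Qed.

Lemma word_weight_ge z t : (2%:R : R) ^- (size t * Lmax f) <= word_weight z t.
Proof.
rewrite lef_pV2 ?qualifE /= ?exprn_gt0 ?ltr0n //.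
by rewrite ler_eXn2l ?ltr1n // size_fs_out_le.
Qed.

Lemma word_weight_le_kraft_sum z (t : seq X) :
  word_weight z t <= kraft_sum (size t) z (fs_next g z t).
Proof.
rewrite /kraft_sum (bigD1 (in_tuple t)) //= lerDl.
by apply: sumr_ge0 => u _; apply: word_weight_ge0.
Qed.

Lemma kraft_sum_gt0_word n z z' :
  0 < kraft_sum n z z' -> exists t : n.-tuple X, fs_next g z t = z'.
Proof.
case: (pickP (fun t : n.-tuple X => fs_next g z t == z')) => [t /eqP|none].
  by exists t.
by rewrite /kraft_sum big_pred0 ?ltxx.
Qed.

Lemma kraft_sum_denom n z z' :
  exists c : nat, kraft_sum n z z' * (2 ^ (n * Lmax f))%:R = c%:R.
Proof.
exists (\sum_(t : n.-tuple X | fs_next g z t == z')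
          2 ^ (n * Lmax f - size (fs_out f g z t)))%N.
rewrite /kraft_sum mulr_suml natr_sum; apply: eq_bigr => t _.
have size_t : (size (fs_out f g z t) <= n * Lmax f)%N.
  by rewrite (leq_trans (size_fs_out_le _ _)) // size_tuple.
rewrite /word_weight !natrX -{1}(subnK size_t) exprD mulrC -mulrA mulfV ?mulr1 //.
by rewrite expf_neq0 // pnatr_eq0.
Qed.

Lemma sum_word_weight n z :
  \sum_(t : n.-tuple X) word_weight z t = \sum_z' kraft_sum n z z'.
Proof. exact: partition_big. Qed.

Section InfoLossless.
Hypothesis f_g_IL : info_lossless f g.

Lemma fs_out_inj_fiber n z z' :
  {in [pred t : n.-tuple X | fs_next g z t == z'] &,
    injective (fun t : n.-tuple X => fs_out f g z t)}.
Proof.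
case: n => [|n] a b; first by rewrite (tuple0 a) (tuple0 b).
rewrite !inE => /eqP next_a /eqP next_b out_ab.
by apply: (@f_g_IL z n.+1 (ltn0Sn n)); rewrite /= out_ab next_a next_b.
Qed.

Lemma kraft_sum_le_linear n z z' : kraft_sum n z z' <= (n * Lmax f).+1%:R.
Proof.
apply: sum_inj_bits_le; first exact: fs_out_inj_fiber.
by move=> t _; rewrite (leq_trans (size_fs_out_le _ _)) ?size_tuple.
Qed.

Lemma kraft_sum_loop_le1 n z : kraft_sum n z z <= 1.
Proof.
have [c c_def] := kraft_sum_denom n z z.
apply: (le1_of_linear_powers (D := n * Lmax f) _ c_def); first by rewrite expn_gt0.
move=> k; apply: le_trans (kraft_sum_expn_le _ _ _) _.
by rewrite mulnA kraft_sum_le_linear.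
Qed.

Hypothesis K_irr : irreducible_mx (kraft_matrix f g R).

Lemma kraft_sum_le n z z' : kraft_sum n z z' <= (2%:R : R) ^+ ((#|Z| - 1) * Lmax f).
Proof.
have [k] := proj2 K_irr (enum_rank z') (enum_rank z).
rewrite mxpow_kraft_matrix => /kraft_sum_gt0_word[t next_t].
have [ys size_ys] := fs_next_short_word g z' t; rewrite next_t => next_ys.
have return_ge : (2%:R : R) ^- (size ys * Lmax f) <= kraft_sum (size ys) z' z.
  by rewrite -next_ys; apply: le_trans (word_weight_ge _ _) (word_weight_le_kraft_sum _ _).
have loop_le1 : kraft_sum n z z' / (2%:R : R) ^+ (size ys * Lmax f) <= 1.
  apply: le_trans (kraft_sum_loop_le1 (n + size ys) z).
  apply: le_trans (kraft_sum_mul_le n (size ys) z z' z).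
  by apply: ler_wpM2l; [exact: kraft_sum_ge0 | exact: return_ge].
rewrite ler_pdivrMr ?exprn_gt0 ?ltr0n // mul1r in loop_le1.
apply: le_trans loop_le1 _.
by rewrite ler_eXn2l ?ltr1n // leq_mul2r size_ys orbT.
Qed.

End InfoLossless.

End KraftSums.

Unset Implicit Arguments.

Theorem theorem2 (R : realFieldType) (X Z : finType)
  (f : Z -> X -> seq bool) (g : Z -> X -> Z) :
  info_lossless f g ->
  irreducible_mx (kraft_matrix f g R) ->
  (forall (z z' : Z) (n : nat), (0 < n)%N ->
     mxpow (kraft_matrix f g R) n (enum_rank z) (enum_rank z')
       = \sum_(t : n.-tuple X | fs_next g z t == z')
            (2%:R : R) ^- size (fs_out f g z t)
     /\ \sum_(t : n.-tuple X | fs_next g z t == z')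
            (2%:R : R) ^- size (fs_out f g z t)
        <= (2%:R : R) ^+ ((#|Z| - 1) * Lmax f)) /\
  (forall (z : Z) (n : nat), (0 < n)%N ->
     \sum_(t : n.-tuple X) (2%:R : R) ^- size (fs_out f g z t)
       <= #|Z|%:R * (2%:R : R) ^+ ((#|Z| - 1) * Lmax f)) /\
  (forall n : nat, (0 < n)%N ->
     \sum_(z : Z) \sum_(t : n.-tuple X) (2%:R : R) ^- size (fs_out f g z t)
       <= (#|Z| ^ 2)%:R * (2%:R : R) ^+ ((#|Z| - 1) * Lmax f)).
Proof.
move=> f_g_IL K_irr; set B := (2%:R : R) ^+ _.
have state_sum_le n z : \sum_(t : n.-tuple X) word_weight R f g z t <= #|Z|%:R * B.
  have -> : #|Z|%:R * B = \sum_(z' : Z) B by rewrite sumr_const mulr_natl.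
  rewrite sum_word_weight.
  by apply: ler_sum => z' _; apply: kraft_sum_le.
split; [|split] => [z z' n _|z n _|n _].
- by rewrite mxpow_kraft_matrix; split; last exact: kraft_sum_le.
- exact: state_sum_le.
- apply: le_trans (ler_sum _ (fun z _ => state_sum_le n z)) _.
  by rewrite sumr_const -[#|_|]/#|Z| -mulrnAl -mulr_natr -natrM mulnn.
Qed.
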